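(* For any class $\mathcal{C}$ of functions $\{\pm1\}^d\to\{\pm1\}$, any $\mathcal{V}\subseteq2^{[d]}$, any $\varepsilon>0$ and any $n,m\in\mathbb{N}$ with $nm\varepsilon\ge2$, $$\delta_{\mathrm{gen}}(\mathcal{C},\mathcal{V},n,m,\varepsilon)\ \le\ 2\,\Pi_{\mathcal{C},\mathcal{V}}(n,2m)\,\exp(-nm\varepsilon/10).$$
   Context: For $f:\{\pm1\}^d\to\{\pm1\}$, $\mathrm{Rel}(f)=\{j\in[d]:\exists v\in\{\pm1\}^d,\ f(v|_{v_j=+1})\neq f(v|_{v_j=-1})\}$, where $v|_{v_j=b}$ is $v$ with coordinate $j$ set to $b$. For distributions $D^{(1)},\dots,D^{(n)}$ over $\{\pm1\}^d\times\{\pm1\}$, $\delta_{\mathrm{gen}}(\mathcal{C},\mathcal{V},n,m,\varepsilon,D^{(1)},\dots,D^{(n)})$ is the probability, over independent samples $S^{(i)}\sim(D^{(i)})^m$, $i\in[n]$, that there exist $h^{(1)},\dots,h^{(n)}\in\mathcal{C}$ with $\bigcup_i\mathrm{Rel}(h^{(i)})\in\mathcal{V}$ such that $\frac{1}{nm}\sum_{i}\sum_{(x,y)\in S^{(i)}}\mathbf{1}[h^{(i)}(x)\neq y]\le\varepsilon$ but $\frac1n\sum_i\Pr_{(x,y)\sim D^{(i)}}[h^{(i)}(x)\neq y]\ge4\varepsilon$. Then $\delta_{\mathrm{gen}}(\mathcal{C},\mathcal{V},n,m,\varepsilon)$ is the supremum over all $D^{(1)},\dots,D^{(n)}$. Multitask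 shattering number: for a sample $S=(x_1,\dots,x_m)$ write $f(S)=(f(x_1),\dots,f(x_m))$; $\Pi_{\mathcal{C},\mathcal{V}}(n,m)$ is the maximum over $S^{(1)},\dots,S^{(n)}\in(\{\pm1\}^d)^m$ of the number of distinct tuples $(f^{(1)}(S^{(1)}),\dots,f^{(n)}(S^{(n)}))$ with $f^{(1)},\dots,f^{(n)}\in\mathcal{C}$ and $\bigcup_i\mathrm{Rel}(f^{(i)})\in\mathcal{V}$. *)

From HB Require Import structures.
From mathcomp Require Import all_boot all_order all_algebra.
From mathcomp Require Import all_classical all_reals.
From mathcomp.analysis Require Import sequences exp.

Import Order.TTheory GRing.Theory Num.Theory.
Local Open Scope ring_scope.

(* Convention: {+1,-1} is encoded by bool, true = +1, false = -1. *)
Definition point (d : nat) := {ffun 'I_d -> bool}.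
Definition hyp (d : nat) := {ffun point d -> bool}.
Definition labeled (d : nat) := (point d * bool)%type.

Definition setcoord d (v : point d) (j : 'I_d) (b : bool) : point d :=
  [ffun k => if k == j then b else v k].

Definition Rel d (f : hyp d) : {set 'I_d} :=
  [set j | [exists v : point d, f (setcoord d v j true) != f (setcoord d v j false)]].

Definition admissible d (C : {set hyp d}) (V : {set {set 'I_d}}) n
    (h : {ffun 'I_n -> hyp d}) : bool :=
  [forall i, h i \in C] && ((\bigcup_(i < n) Rel d (h i)) \in V).

Definition is_dist (R : realType) d (D : {ffun labeled d -> R}) : Prop :=
  (forall z, 0 <= D z) /\ \sum_z D z = 1.

Definition bad_event (R : realType) d (C : {set hyp d}) (V : {set {set 'I_d}})
    n m (eps : R) (D : 'I_n -> {ffun labeled d -> R})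
    (S : {ffun 'I_n -> {ffun 'I_m -> labeled d}}) : bool :=
  [exists h : {ffun 'I_n -> hyp d},
     [&& admissible d C V n h,
         (n * m)%:R^-1 * (\sum_(i < n) \sum_(j < m)
            ((h i (S i j).1 != (S i j).2) : nat)%:R) <= eps &
         4 * eps <= n%:R^-1 *
            (\sum_(i < n) \sum_(z : labeled d | h i z.1 != z.2) D i z)]].

Definition delta_gen_D (R : realType) d (C : {set hyp d}) (V : {set {set 'I_d}})
    n m (eps : R) (D : 'I_n -> {ffun labeled d -> R}) : R :=
  \sum_(S : {ffun 'I_n -> {ffun 'I_m -> labeled d}} | bad_event R d C V n m eps D S)
     \prod_(i < n) \prod_(j < m) D i (S i j).

Definition delta_gen (R : realType) d (C : {set hyp d}) (V : {set {set 'I_d}})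
    n m (eps : R) : R :=
  sup [set delta_gen_D R d C V n m eps D | D in
         [set D : 'I_n -> {ffun labeled d -> R} | forall i, is_dist R d (D i)]]%classic.

Definition shatter d (C : {set hyp d}) (V : {set {set 'I_d}}) n m : nat :=
  \max_(S : {ffun 'I_n -> {ffun 'I_m -> point d}})
    #|[set ([ffun i => [ffun j => h i (S i j)]] : {ffun 'I_n -> {ffun 'I_m -> bool}})
        | h : {ffun 'I_n -> hyp d} in [set h | admissible d C V n h]]|.

From Pilot Require Import Defs.
From HB Require Import structures.
From mathcomp Require Import all_boot all_order all_algebra.
From mathcomp Require Import all_classical all_reals.
From mathcomp.analysis Require Import sequences exp.
From mathcomp Require Import lra.
Import Order.TTheory GRing.Theory Num.Theory.
Local Open Scope ring_scope.

(* Symmetrization with a ghost sample.  If the sample S is bad, witnessed by h with at most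
   k = n m eps empirical mistakes and average true error at least 4 eps, a Chernoff bound shows
   that on an independent ghost sample S' the same h makes at least 2 k mistakes with
   probability at least 1/2; hence delta_gen <= 2 P[G], where G says that some admissible h
   makes at most k mistakes on S and at least 2 k on S'.  Swapping any pattern of coordinates
   between S and S' preserves the product distribution, so P[G] is the average over swap
   patterns.  Once the 2 m points of each task are fixed, G only depends on the labeling that
   h induces on them, of which there are at most Pi(n, 2 m), and for a fixed labeling an
   exponential-moment bound shows that at most a fraction e^(-k/10) of the swap patterns
   leave at most k mistakes on one side and at least 2 k on the other. *)

Lemma bigA_distr_bigA2 (R : comNzRingType) (I J T : finType) (F : I -> J -> T -> R) :
  \sum_(s : {ffun I -> {ffun J -> T}}) \prod_i \prod_j F i j (s i j)
  = \prod_i \prod_j \sum_t F i j t.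
Proof.
rewrite (eq_bigr (fun i => \sum_(g : {ffun J -> T}) \prod_j F i j (g j))).
  by rewrite bigA_distr_bigA.
by move=> i _; rewrite bigA_distr_bigA.
Qed.

Section ExponentialMoments.
Variable R : realType.

Lemma indicator_le_expR (b : bool) (x : R) : (b -> 0 <= x) -> (b : nat)%:R <= expR x.
Proof.
by case: b => [/(_ isT) x0 | _] /=; [apply: le_trans (expR_ge1Dx x); lra | exact: expR_ge0].
Qed.

Lemma expR_moment_factor (I J T : finType) (w f : I -> J -> T -> R) :
  \sum_(s : {ffun I -> {ffun J -> T}})
      (\prod_i \prod_j w i j (s i j)) * expR (\sum_i \sum_j f i j (s i j))
  = \prod_i \prod_j \sum_t w i j t * expR (f i j t).
Proof.
rewrite -bigA_distr_bigA2; apply: eq_bigr => s _.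
rewrite expR_sum -big_split; apply: eq_bigr => i _.
by rewrite expR_sum -big_split.
Qed.

Lemma card_ffun2_bool (I J : finType) :
  #|{: {ffun I -> {ffun J -> bool}}}|%:R = \prod_(i : I) \prod_(j : J) (2 : R).
Proof.
have -> : (2 : R) = \sum_(b : bool) 1 by rewrite big_bool.
rewrite -(@bigA_distr_bigA2 R _ _ _ (fun _ _ _ => 1)) -sumr_const.
apply: eq_bigr => s _; rewrite big1 // => i _; exact: big1.
Qed.

Lemma ln2_le1 : ln (2 : R) <= 1.
Proof. by have := @le_ln1Dx R 1; rewrite -[1 + 1]/2; apply; lra. Qed.

Lemma expR4_ge32 : 32 <= expR (4 : R).
Proof.
have e14 : 5/4 <= expR (1/4 : R) by have := expR_ge1Dx (1/4 : R); lra.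
have -> : (4 : R) = 16%:R * (1/4) by rewrite -[16%:R]/16; lra.
rewrite expRM_natl.
have : (5/4 : R) ^+ 16 <= expR (1/4) ^+ 16 by rewrite lerXn2r // ?nnegrE; lra.
suff : 32 <= (5/4 : R) ^+ 16 by lra.
rewrite !exprS expr0; lra.
Qed.

Lemma expR_4ln2B4_le_half : expR (4 * ln 2 - 4 : R) <= 1/2.
Proof.
rewrite expRD expRM_natl lnK ?posrE //.
have := expR4_ge32; have := expRxMexpNx_1 (4 : R); have := expR_gt0 (- 4 : R).
rewrite !exprS expr0; nra.
Qed.

Lemma swap_weight_le2 (a b : bool) :
  expR (ln (2/3) * (a : nat)%:R + ln (4/3) * (b : nat)%:R)
  + expR (ln (2/3) * (b : nat)%:R + ln (4/3) * (a : nat)%:R) <= 2 :> R.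
Proof.
have e23 : expR (ln (2/3)) = 2/3 :> R by rewrite lnK // posrE; lra.
have e43 : expR (ln (4/3)) = 4/3 :> R by rewrite lnK // posrE; lra.
case: a; case: b; rewrite /= ?mulr1 ?mulr0 ?addr0 ?add0r ?expR0 ?e23 ?e43; try lra.
rewrite expRD e23 e43; lra.
Qed.

Lemma ln_swap_weights_ge : 1/10 <= ln (2/3) + 2 * ln (4/3) :> R.
Proof.
have -> : ln (2/3) + 2 * ln (4/3) = ln (32/27 : R).
  have -> : ln (2/3) + 2 * ln (4/3) = ln (2/3) + ln (4/3) + ln (4/3) :> R by lra.
  rewrite -!lnM ?posrE; try lra.
  by congr ln; lra.
rewrite -ler_expR lnK ?posrE; last lra.
have := expR_ge1Dx (- (1/10) : R); have := expRxMexpNx_1 (1/10 : R).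
have := expR_gt0 (1/10 : R); nra.
Qed.

Definition swap_count {I J : finType} (e1 e2 : I -> J -> bool)
    (s : {ffun I -> {ffun J -> bool}}) : R :=
  \sum_i \sum_j ((if s i j then e2 i j else e1 i j) : nat)%:R.

(* Exponential moment with weight [2/3] on the count that must stay below [k] and [4/3] on
   the one that must exceed [2 k]: each coordinate contributes a factor at most 1 on average,
   and [(2/3) (4/3)^2 >= e^(1/10)]. *)
Lemma swap_count_tail (I J : finType) (e1 e2 : I -> J -> bool) (k : R) : 0 <= k ->
  \sum_(s : {ffun I -> {ffun J -> bool}})
     ((swap_count e1 e2 s <= k) && (2 * k <= swap_count e2 e1 s) : nat)%:R
  <= #|{: {ffun I -> {ffun J -> bool}}}|%:R * expR (- (k / 10)).
Proof.
move=> k0; set la := ln (2/3 : R); set lb := ln (4/3 : R).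
have la0 : la <= 0 by rewrite /la ln_le0 //; lra.
have lb0 : 0 <= lb by rewrite /lb ln_ge0 //; lra.
pose f i j (t : bool) := la * ((if t then e2 i j else e1 i j) : nat)%:R
                       + lb * ((if t then e1 i j else e2 i j) : nat)%:R.
pose c := expR (- (la * k + lb * (2 * k))).
have moment s : la * swap_count e1 e2 s + lb * swap_count e2 e1 s
                = \sum_i \sum_j f i j (s i j).
  rewrite /swap_count !mulr_sumr -big_split; apply: eq_bigr => i _.
  by rewrite !mulr_sumr -big_split; apply: eq_bigr => j _; rewrite /f; case: (s i j).
apply: (@le_trans _ _ (\sum_(s : {ffun I -> {ffun J -> bool}})
    c * ((\prod_(i : I) \prod_(j : J) 1) * expR (\sum_i \sum_j f i j (s i j))))).
  apply: ler_sum => s _; rewrite big1 ?mul1r => [|i _]; last exact: big1.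
  rewrite /c -expRD -moment; apply: indicator_le_expR => /andP [X_le Y_ge].
  rewrite -subr_ge0 in X_le; rewrite -subr_ge0 in Y_ge.
  have := mulr_le0_ge0 la0 X_le; have := mulr_ge0 lb0 Y_ge; nra.
have moment_ge0 i j : 0 <= \sum_t 1 * expR (f i j t).
  by apply: sumr_ge0 => t _; rewrite mul1r expR_ge0.
rewrite -mulr_sumr (@expR_moment_factor _ _ _ (fun _ _ _ => 1) f) card_ffun2_bool mulrC.
apply: ler_pM; first (by do 2 apply: prodr_ge0 => ? _); first exact: expR_ge0.
  apply: ler_prod => i _; apply/andP; split; first exact: prodr_ge0.
  apply: ler_prod => j _; rewrite moment_ge0 big_bool !mul1r /=.
  exact: swap_weight_le2.
rewrite /c ler_expR.
have := ln_swap_weights_ge; rewrite -subr_ge0 -/la -/lb => /mulr_ge0/(_ k0).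
lra.
Qed.
End ExponentialMoments.

Section Sampling.
Variables (R : realType) (d : nat) (I J : finType) (D : I -> {ffun labeled d -> R}).
Hypothesis D_dist : forall i, is_dist R d (D i).

Local Notation sample := {ffun I -> {ffun J -> labeled d}}.

Definition sample_prob (S : sample) : R := \prod_i \prod_j D i (S i j).

Definition emp_err (h : {ffun I -> hyp d}) (S : sample) : R :=
  \sum_i \sum_j ((h i (S i j).1 != (S i j).2) : nat)%:R.

Definition true_err (f : hyp d) (i : I) : R := \sum_(z : labeled d | f z.1 != z.2) D i z.

Lemma sample_prob_ge0 S : 0 <= sample_prob S.
Proof. by apply: prodr_ge0 => i _; apply: prodr_ge0 => j _; case: (D_dist i). Qed.

Lemma sum_sample_prob : \sum_S sample_prob S = 1.
Proof.
rewrite (@bigA_distr_bigA2 _ _ _ _ (fun i j z => D i z)).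
by apply: big1 => i _; apply: big1 => j _; case: (D_dist i).
Qed.

Lemma mistake_moment (f : hyp d) i :
  \sum_z D i z * expR (- ln 2 * ((f z.1 != z.2) : nat)%:R) <= expR (- (true_err f i / 2)).
Proof.
have e2 : expR (- ln 2) = 1/2 :> R by rewrite expRN lnK ?posrE // mul1r.
apply: le_trans (expR_ge1Dx _).
rewrite (bigID (fun z : labeled d => f z.1 != z.2)) /=.
rewrite (eq_bigr (fun z => D i z * (1/2))) => [|z ->]; last by rewrite mulr1 e2.
rewrite [X in _ + X](eq_bigr (D i)) => [|z /negbTE ->]; last by rewrite mulr0 expR0 mulr1.
case: (D_dist i) => _; rewrite (bigID (fun z : labeled d => f z.1 != z.2)) /=.
by rewrite -mulr_suml /true_err; lra.
Qed.

(* Chernoff bound at the rate [ln 2]: the probability is at most [e^(2 k (ln 2 - 1))],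
   which is at most [1/2] once [k >= 2]. *)
Lemma emp_err_small_prob (h : {ffun I -> hyp d}) (k : R) : 2 <= k ->
  4 * k <= #|J|%:R * \sum_i true_err (h i) i ->
  \sum_S sample_prob S * ((emp_err h S < 2 * k)%R : nat)%:R <= 1/2.
Proof.
move=> k_ge2 mean_ge; set c := ln (2 : R).
have c_gt0 : 0 < c by rewrite /c ln_gt0 //; lra.
pose f i (j : J) (z : labeled d) := - c * ((h i z.1 != z.2) : nat)%:R.
apply: (@le_trans _ _ (\sum_S expR (c * (2 * k)) *
    (sample_prob S * expR (\sum_i \sum_j f i j (S i j))))).
  apply: ler_sum => S _; rewrite mulrCA -expRD ler_wpM2l ?sample_prob_ge0 //.
  apply: indicator_le_expR => err_lt.
  have -> : \sum_i \sum_j f i j (S i j) = - c * emp_err h S.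
    by rewrite /emp_err mulr_sumr; apply: eq_bigr => i _; rewrite mulr_sumr.
  have : 0 <= c * (2 * k - emp_err h S) by rewrite mulr_ge0 ?subr_ge0 ?ltW.
  lra.
rewrite -mulr_sumr (@expR_moment_factor _ _ _ _ (fun i _ => D i) f).
have moment_ge0 i (j : J) : 0 <= \sum_z D i z * expR (f i j z).
  by apply: sumr_ge0 => z _; rewrite mulr_ge0 ?expR_ge0 //; case: (D_dist i).
apply: (@le_trans _ _ (expR (c * (2 * k)) *
    \prod_i \prod_(j : J) expR (- (true_err (h i) i / 2)))).
  apply: ler_wpM2l; first exact: expR_ge0.
  apply: ler_prod => i _; apply/andP; split; first by apply: prodr_ge0.
  by apply: ler_prod => j _; rewrite moment_ge0 mistake_moment.
have -> : \prod_i \prod_(j : J) expR (- (true_err (h i) i / 2))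
          = expR (- (#|J|%:R * \sum_i true_err (h i) i / 2)).
  rewrite mulr_sumr -sumrN expR_sum; apply: eq_bigr => i _.
  have -> : - (#|J|%:R * (true_err (h i) i / 2)) = \sum_(j : J) - (true_err (h i) i / 2).
    by rewrite sumr_const mulr_natl mulNrn.
  by rewrite expR_sum.
rewrite -expRD; apply: le_trans (expR_4ln2B4_le_half R); rewrite ler_expR.
have : (k - 2) * (c - 1) <= 0 by rewrite mulr_ge0_le0 ?subr_ge0 ?subr_le0 ?ln2_le1.
rewrite -/c -mulr_suml; nra.
Qed.

Definition swap (s : {ffun I -> {ffun J -> bool}}) (S S' : sample) : sample :=
  [ffun i => [ffun j => if s i j then S' i j else S i j]].

Lemma sample_prob_swap s S S' :
  sample_prob (swap s S S') * sample_prob (swap s S' S) = sample_prob S * sample_prob S'.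
Proof.
rewrite /sample_prob -!big_split /=; apply: eq_bigr => i _; rewrite -!big_split /=.
by apply: eq_bigr => j _; rewrite !ffunE; case: (s i j); rewrite // mulrC.
Qed.

Lemma sum_sample_prob2_swap (F : sample -> sample -> R) s :
  \sum_S \sum_S' sample_prob S * sample_prob S' * F S S' =
  \sum_S \sum_S' sample_prob S * sample_prob S' * F (swap s S S') (swap s S' S).
Proof.
rewrite !pair_bigA /=.
pose swap2 (p : sample * sample) := (swap s p.1 p.2, swap s p.2 p.1).
have swap2K : involutive swap2.
  by move=> [S S']; congr (_, _); apply/ffunP => i; apply/ffunP => j;
    rewrite !ffunE; case: (s i j).
rewrite (reindex_inj (inv_inj swap2K)) /=.
by apply: eq_bigr => p _; rewrite sample_prob_swap.
Qed.

End Sampling.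

Arguments swap_count {R I J} e1 e2 s.
Arguments sample_prob {R d I J} D S.
Arguments emp_err {R d I J} h S.
Arguments true_err {R d I} D f i.
Arguments swap {d I J} s S S'.
Arguments sample_prob_ge0 {R d I J D} D_dist S.
Arguments sum_sample_prob {R d I J D} D_dist.
Arguments sum_sample_prob2_swap {R d I J} D F s.
Arguments emp_err_small_prob {R d I J D} D_dist h k.

Section Symmetrization.
Variables (R : realType) (d n m : nat) (C : {set hyp d}) (V : {set {set 'I_d}}) (k : R).

Local Notation sample := {ffun 'I_n -> {ffun 'I_m -> labeled d}}.
Local Notation swaps := {ffun 'I_n -> {ffun 'I_m -> bool}}.
Local Notation labeling := {ffun 'I_n -> {ffun 'I_(2 * m) -> bool}}.

Definition ghost_gap (S S' : sample) : bool :=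
  [exists h : {ffun 'I_n -> hyp d},
    [&& admissible d C V n h, emp_err h S <= k & 2 * k <= emp_err h S']].

Definition double_ord_eq : (2 * m = m + m)%N := etrans (mul2n m) (esym (addnn m)).
Definition left_ord (j : 'I_m) : 'I_(2 * m) := cast_ord (esym double_ord_eq) (lshift m j).
Definition right_ord (j : 'I_m) : 'I_(2 * m) := cast_ord (esym double_ord_eq) (rshift m j).

Definition joint_points (S S' : sample) : {ffun 'I_n -> {ffun 'I_(2 * m) -> Defs.point d}} :=
  [ffun i => [ffun t => match fintype.split (cast_ord double_ord_eq t) with
                        | inl j => (S i j).1 | inr j => (S' i j).1 end]].

Definition labels (S S' : sample) (h : {ffun 'I_n -> hyp d}) : labeling :=
  [ffun i => [ffun t => h i (joint_points S S' i t)]].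

Lemma labels_left S S' h i j : labels S S' h i (left_ord j) = h i (S i j).1.
Proof.
rewrite !ffunE /left_ord cast_ordKV.
by have := unsplitK (inl j : 'I_m + 'I_m) => /= ->.
Qed.

Lemma labels_right S S' h i j : labels S S' h i (right_ord j) = h i (S' i j).1.
Proof.
rewrite !ffunE /right_ord cast_ordKV.
by have := unsplitK (inr j : 'I_m + 'I_m) => /= ->.
Qed.

Definition patterns (S S' : sample) : {set labeling} :=
  [set labels S S' h | h in [set h | admissible d C V n h]].

Lemma card_patterns_le_shatter S S' : (#|patterns S S'| <= shatter d C V n (2 * m))%N.
Proof. exact: leq_trans (leq_bigmax (joint_points S S')). Qed.

Definition left_mistakes (S : sample) (q : labeling) i j := q i (left_ord j) != (S i j).2.
Definition right_mistakes (S' : sample) (q : labeling) i j := q i (right_ord j) != (S' i j).2.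

Lemma emp_err_swap S S' h s :
  emp_err h (swap s S S')
    = swap_count (left_mistakes S (labels S S' h)) (right_mistakes S' (labels S S' h)) s :> R.
Proof.
apply: eq_bigr => i _; apply: eq_bigr => j _.
by rewrite /left_mistakes /right_mistakes labels_left labels_right !ffunE; case: (s i j).
Qed.

Lemma emp_err_swapC S S' h s :
  emp_err h (swap s S' S)
    = swap_count (right_mistakes S' (labels S S' h)) (left_mistakes S (labels S S' h)) s :> R.
Proof.
apply: eq_bigr => i _; apply: eq_bigr => j _.
by rewrite /left_mistakes /right_mistakes labels_left labels_right !ffunE; case: (s i j).
Qed.

(* The points of [S] and [S'] taken together are invariant under swaps, so only the labeling
   that [h] induces on them matters. *)
Lemma count_gap_swaps S S' : 0 <= k ->
  \sum_(s : swaps) (ghost_gap (swap s S S') (swap s S' S) : nat)%:R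
  <= (shatter d C V n (2 * m))%:R * (#|{: swaps}|%:R * expR (- (k / 10))).
Proof.
move=> k_ge0.
pose tail q (s : swaps) :=
  (swap_count (left_mistakes S q) (right_mistakes S' q) s <= k) &&
  (2 * k <= swap_count (right_mistakes S' q) (left_mistakes S q) s).
apply: (@le_trans _ _ (\sum_(s : swaps) \sum_(q in patterns S S') (tail q s : nat)%:R)).
  apply: ler_sum => s _.
  have [/existsP [h /and3P [adm err_le err_ge]] | _] := boolP (ghost_gap _ _); last first.
    by apply: sumr_ge0 => q _; rewrite ler0n.
  have hq : labels S S' h \in patterns S S' by apply/imsetP; exists h; rewrite ?inE.
  rewrite (bigD1 _ hq) /= /tail -emp_err_swap -emp_err_swapC err_le err_ge lerDl.
  by apply: sumr_ge0 => q _; rewrite ler0n.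
rewrite exchange_big /=.
apply: (@le_trans _ _ (\sum_(q in patterns S S') #|{: swaps}|%:R * expR (- (k / 10)))).
  by apply: ler_sum => q _; exact: swap_count_tail.
rewrite sumr_const -[X in X <= _]mulr_natl ler_wpM2r ?ler_nat ?card_patterns_le_shatter //.
by rewrite mulr_ge0 ?expR_ge0.
Qed.

Variable D : 'I_n -> {ffun labeled d -> R}.
Hypothesis D_dist : forall i, is_dist R d (D i).

Local Notation P := (sample_prob D).

(* Swapping coordinates between the sample and the ghost sample preserves the product
   distribution, so the gap probability is the average over all swap patterns. *)
Lemma gap_prob_le : 0 <= k ->
  \sum_(S : sample) \sum_(S' : sample) P S * P S' * (ghost_gap S S' : nat)%:R
  <= (shatter d C V n (2 * m))%:R * expR (- (k / 10)).
Proof.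
move=> k_ge0; set Z : R := #|{: swaps}|%:R.
have Z_gt0 : 0 < Z by rewrite ltr0n; apply/card_gt0P; exists [ffun=> [ffun=> true]].
rewrite -(ler_pM2l Z_gt0) {1}/Z -sumr_const mulr_suml.
under eq_bigr => s _ do
  rewrite mul1r (sum_sample_prob2_swap D (fun S S' => (ghost_gap S S' : nat)%:R) s).
rewrite exchange_big /=.
under eq_bigr => S _ do rewrite exchange_big /=.
apply: (@le_trans _ _ (\sum_(S : sample) \sum_(S' : sample) P S * P S' *
    ((shatter d C V n (2 * m))%:R * (Z * expR (- (k / 10)))))).
  apply: ler_sum => S _; apply: ler_sum => S' _; rewrite -mulr_sumr.
  by rewrite ler_wpM2l ?mulr_ge0 ?(sample_prob_ge0 D_dist) ?count_gap_swaps.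
under eq_bigr => S _ do rewrite -mulr_suml -mulr_sumr (sum_sample_prob D_dist) mulr1.
by rewrite -mulr_suml (sum_sample_prob D_dist) mul1r mulrCA.
Qed.

Variable eps : R.
Hypothesis k_def : k = (n * m)%:R * eps.

Lemma bad_event_witness S : (0 < n * m)%N -> bad_event R d C V n m eps D S ->
  exists2 h, admissible d C V n h &
    (emp_err h S <= k) && (4 * k <= m%:R * \sum_i true_err D (h i) i).
Proof.
move=> nm_gt0 /existsP [h /and3P [adm emp_le true_ge]]; exists h => //.
have [n_gt0 _] : (0 < n)%N /\ (0 < m)%N by apply/andP; rewrite -muln_gt0.
rewrite ler_pdivrMl ?ltr0n // -k_def in emp_le; rewrite emp_le /=.
rewrite ler_pdivlMl ?ltr0n // in true_ge.
have := ler_wpM2l (ler0n R m) true_ge.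
by rewrite k_def natrM /true_err; lra.
Qed.

Lemma bad_gap_prob_ge_half S : 2 <= k -> bad_event R d C V n m eps D S ->
  1/2 <= \sum_(S' : sample) P S' * (ghost_gap S S' : nat)%:R.
Proof.
move=> k_ge2 bad.
have nm_gt0 : (0 < n * m)%N.
  rewrite lt0n; apply: contraTneq k_ge2 => nm0.
  by rewrite k_def nm0 mul0r; lra.
have [h adm /andP [emp_le mean_ge]] := bad_event_witness _ nm_gt0 bad.
rewrite -(card_ord m) in mean_ge.
have := emp_err_small_prob D_dist h _ k_ge2 mean_ge.
suff : \sum_(S' : sample) P S' * (1 - ((emp_err h S' < 2 * k)%R : nat)%:R)
       <= \sum_(S' : sample) P S' * (ghost_gap S S' : nat)%:R.
  under eq_bigr => S' _ do rewrite mulrBr mulr1.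
  by rewrite sumrB (sum_sample_prob D_dist); lra.
apply: ler_sum => S' _; rewrite ler_wpM2l ?(sample_prob_ge0 D_dist) //.
case: (ltP (emp_err h S') (2 * k)) => [_|err_ge]; first by rewrite subrr ler0n.
suff -> : ghost_gap S S' by rewrite subr0.
by apply/existsP; exists h; rewrite adm emp_le err_ge.
Qed.

Lemma delta_gen_D_le : 2 <= k ->
  delta_gen_D R d C V n m eps D <= 2 * (shatter d C V n (2 * m))%:R * expR (- (k / 10)).
Proof.
move=> k_ge2.
have P_ge0 := sample_prob_ge0 D_dist.
apply: (@le_trans _ _ (\sum_(S : sample) P S *
    (2 * \sum_(S' : sample) P S' * (ghost_gap S S' : nat)%:R))).
  rewrite [X in _ <= X](bigID (bad_event R d C V n m eps D)) /= -[X in X <= _]addr0.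
  apply: lerD.
    apply: ler_sum => S bad; rewrite -[X in X <= _]mulr1 ler_wpM2l ?P_ge0 //.
    by have := bad_gap_prob_ge_half _ k_ge2 bad; lra.
  apply: sumr_ge0 => S _; rewrite mulr_ge0 ?mulr_ge0 ?sumr_ge0 // => S' _.
  by rewrite mulr_ge0.
under eq_bigr => S _ do rewrite mulrCA mulr_sumr.
rewrite -mulr_sumr -mulrA ler_wpM2l //.
under eq_bigr => S _ do under eq_bigr => S' _ do rewrite mulrA.
by apply: gap_prob_le; lra.
Qed.

End Symmetrization.

Theorem mainTheorem6 (R : realType) (d : nat) (C : {set hyp d})
    (V : {set {set 'I_d}}) (eps : R) (n m : nat) :
  0 < eps -> 2 <= (n * m)%:R * eps ->
  delta_gen R d C V n m eps <=
    2 * (shatter d C V n (2 * m))%:R * expR (- ((n * m)%:R * eps) / 10).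
Proof.
move=> _ k_ge2; rewrite mulNr.
have bound_ge0 : 0 <= 2 * (shatter d C V n (2 * m))%:R * expR (- ((n * m)%:R * eps / 10)).
  by rewrite !mulr_ge0 ?expR_ge0.
rewrite /delta_gen; set A := [set _ | _ in _]%classic.
have [A_ne | /nonemptyPn ->] := pselect (A !=set0)%classic; last by rewrite sup0.
apply: ge_sup => // _ [D D_dist <-].
exact: (@delta_gen_D_le R d n m C V _ D D_dist eps erefl k_ge2).
Qed.
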